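(* Let $\mathcal{H}_S\cong\mathbb{C}^d$ and let the environment be $\mathcal{H}_E=\mathcal{H}_{E_1}\otimes\mathcal{H}_{E_2}$ with $\mathcal{H}_{E_1}\cong\mathcal{H}_{E_2}\cong\mathbb{C}^d$, and let $\eta$ be any density operator on $\mathcal{H}_{E_1}\otimes\mathcal{H}_{E_2}$. Let $U_1$ be the swap of $\mathcal{H}_S$ with $\mathcal{H}_{E_1}$ (identity on $E_2$) and $U_2$ the swap of $\mathcal{H}_S$ with $\mathcal{H}_{E_2}$ (identity on $E_1$). Define $\Lambda_{s:r}(X)=\operatorname{tr}_E[U_1(X\otimes\eta)U_1^\dagger]$, $\Lambda_{t:r}(X)=\operatorname{tr}_E[U_2U_1(X\otimes\eta)U_1^\dagger U_2^\dagger]$, and for density operators $\rho$, $\eta_s(\rho)=\operatorname{tr}_S[U_1(\rho\otimes\eta)U_1^\dagger]$, $\Lambda^{(\rho)}_{t:s}(\sigma)=\operatorname{tr}_E[U_2(\sigma\otimes\eta_s(\rho))U_2^\dagger]$. Then (i) the process is oCP-divisible: $\Lambda^{(\rho)}_{t:s}$ is independent of $\rho$ and, calling it $\Lambda_{t:s}$, $\Lambda_{t:r}=\Lambda_{t:s}\circ\Lambda_{s:r}$; and (ii) for all density operators $\rho,\sigma$ on $\mathcal{H}_S$, the following ''storing'' experiment yields the joint state $\eta$: let $A$ be an ancilla with $\mathcal{H}_A\cong\mathcal{H}_S$, let $\tau_{AE}$ be the state $U_1(\rho\otimes\eta)U_1^\dagger$ with the system factor relabelled as $A$, and let $\omega_{AS}:=\operatorname{tr}_E[(\mathbb{1}_A\otimes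 U_2)(\tau_{AE}\otimes\sigma_S)(\mathbb{1}_A\otimes U_2)^\dagger]$; then $\omega_{AS}=\eta$ under the identification $A\leftrightarrow E_1$, $S\leftrightarrow E_2$. Consequently, whenever $\eta$ is not a product state, $\omega_{AS}$ is correlated although the inputs $\rho$ and $\sigma$ were independent, so the oCP-divisible process exhibits memory (is non-Markovian).
   Context: Times $r<s<t$; $U_1$ acts from $r$ to $s$ and $U_2$ from $s$ to $t$. oCP-divisibility means: the dynamics $\Lambda^{(\rho)}_{t:s}$ obtained by preparing $\rho$ at $r$, discarding the system just before $s$ and inserting a fresh $\sigma$ at $s$ does not depend on $\rho$, and the resulting map $\Lambda_{t:s}$ composes with $\Lambda_{s:r}$ to $\Lambda_{t:r}$. In the storing experiment the system at $s$ is kept in the ancilla $A$ instead of being discarded. *)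

(* operators on finite-dimensional Hilbert spaces C^T, for a
   finite index type T, as matrices T x T -> C over a numClosedFieldType C
   (e.g. algC or complex numbers). *)
From HB Require Import structures.
From mathcomp Require Import all_boot all_order all_algebra.
Set Implicit Arguments. Unset Strict Implicit. Unset Printing Implicit Defensive.
Import Order.TTheory GRing.Theory Num.Theory.
Local Open Scope ring_scope.

Section Ops.
Variable C : numClosedFieldType.

Definition op (T : finType) := T -> T -> C.

Definition opmul (T : finType) (A B : op T) : op T :=
  fun i j => \sum_k A i k * B k j.
Definition adj (T : finType) (A : op T) : op T := fun i j => (A j i)^*.
Definition idop (T : finType) : op T := fun i j => (i == j)%:R.
Definition trace (T : finType) (A : op T) : C := \sum_i A i i.

Definition conjop (T : finType) (U X : op T) : op T := opmul (opmul U X) (adj U).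

Definition psd (T : finType) (A : op T) : Prop :=
  (forall i j, A i j = (A j i)^*) /\
  (forall v : T -> C, 0 <= \sum_i \sum_j (v i)^* * A i j * v j).
Definition density (T : finType) (A : op T) : Prop := psd A /\ trace A = 1.

Definition tens (T1 T2 : finType) (A : op T1) (B : op T2) : op (T1 * T2)%type :=
  fun i j => A i.1 j.1 * B i.2 j.2.
Definition ptr2 (T1 T2 : finType) (A : op (T1 * T2)%type) : op T1 :=
  fun i j => \sum_k A (i, k) (j, k).
Definition ptr1 (T1 T2 : finType) (A : op (T1 * T2)%type) : op T2 :=
  fun i j => \sum_k A (k, i) (k, j).
Definition reidx (T T' : finType) (f : T' -> T) (A : op T) : op T' :=
  fun i j => A (f i) (f j).

End Ops.

Section Model.
Variables (C : numClosedFieldType) (d : nat).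
(* H_S = C^d indexed by S; H_E = H_E1 (x) H_E2 indexed by E = 'I_d * 'I_d *)
Notation S := 'I_d.
Notation E := ('I_d * 'I_d)%type.

(* U1 = swap of S and E1 (identity on E2): |a,(b,c)> |-> |b,(a,c)> *)
Definition U1 : op C (S * E)%type :=
  fun i j => ((i.1 == j.2.1) && (i.2.1 == j.1) && (i.2.2 == j.2.2))%:R.
(* U2 = swap of S and E2 (identity on E1): |a,(b,c)> |-> |c,(b,a)> *)
Definition U2 : op C (S * E)%type :=
  fun i j => ((i.1 == j.2.2) && (i.2.2 == j.1) && (i.2.1 == j.2.1))%:R.

Variable eta : op C E.

Definition Lam_sr (X : op C S) : op C S := ptr2 (conjop U1 (tens X eta)).
Definition Lam_tr (X : op C S) : op C S :=
  ptr2 (opmul (opmul (opmul U2 U1) (tens X eta)) (opmul (adj U1) (adj U2))).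
Definition eta_s (rho : op C S) : op C E := ptr1 (conjop U1 (tens rho eta)).
Definition Lam_ts (rho : op C S) (X : op C S) : op C S :=
  ptr2 (conjop U2 (tens X (eta_s rho))).

(* Storing experiment.  Ancilla A = 'I_d (same as S). *)
Definition tau_AE (rho : op C S) : op C (S * E)%type := conjop U1 (tens rho eta).
(* tau_AE (x) sigma_S, ordered as A (x) (S (x) E) *)
Definition ord_A_SE (x : (S * (S * E))%type) : ((S * E) * S)%type := ((x.1, x.2.2), x.2.1).
Definition ord_AS_E (x : ((S * S) * E)%type) : (S * (S * E))%type := (x.1.1, (x.1.2, x.2)).
Definition omega_AS (rho sigma : op C S) : op C (S * S)%type :=
  ptr2 (reidx ord_AS_E
    (conjop (tens (@idop C S) U2) (reidx ord_A_SE (tens (tau_AE rho) sigma)))).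

End Model.

Definition product_state (C : numClosedFieldType) (T1 T2 : finType)
  (w : op C (T1 * T2)%type) : Prop :=
  exists (a : op C T1) (b : op C T2), density a /\ density b /\ w = tens a b.

From HB Require Import structures.
From mathcomp Require Import all_boot all_order all_algebra.
From Stdlib Require Import FunctionalExtensionality.
Set Implicit Arguments. Unset Strict Implicit. Unset Printing Implicit Defensive.
Import Order.TTheory GRing.Theory Num.Theory.
Local Open Scope ring_scope.

(* Both unitaries are permutation operators, so conjugating by them only
   relabels matrix indices and every partial trace factors into traces.
   After the first swap the environment holds rho (x) eta_E2, and the second
   swap hands the system eta_E2 whatever rho was: Lam_{t:s} sigma =
   tr(sigma) eta_E2, which is also Lam_{t:r}.  In the storing experiment the
   first swap moves E1 into the ancilla and the second moves E2 into the
   system, so (A, S) ends up in exactly the state eta. *)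

Section PermutationOperators.
Variable C : numClosedFieldType.

Lemma op_ext (T : finType) (A B : op C T) : (forall i j, A i j = B i j) -> A = B.
Proof. by move=> eqAB; do 2 apply: functional_extensionality => ?; apply: eqAB. Qed.

Definition permop (T : finType) (f : T -> T) : op C T := fun i j => (j == f i)%:R.

Lemma idop_permop (T : finType) : @idop C T = permop id.
Proof. by apply: op_ext => i j; rewrite /idop /permop eq_sym. Qed.

Lemma opmul_permopl (T : finType) (f : T -> T) (X : op C T) i j :
  opmul (permop f) X i j = X (f i) j.
Proof.
rewrite /opmul (bigD1 (f i)) //= /permop eqxx mul1r big1 ?addr0 // => k /negbTE->.
by rewrite mul0r.
Qed.

Lemma opmul_adj_permopr (T : finType) (f : T -> T) (X : op C T) i j :
  opmul X (adj (permop f)) i j = X i (f j).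
Proof.
rewrite /opmul (bigD1 (f j)) //= /adj /permop eqxx conjC1 mulr1 big1 ?addr0 //.
by move=> k /negbTE->; rewrite conjC0 mulr0.
Qed.

Lemma conjop_permop (T : finType) (f : T -> T) (X : op C T) :
  conjop (permop f) X = reidx f X.
Proof. by apply: op_ext => i j; rewrite /conjop opmul_adj_permopr opmul_permopl. Qed.

Lemma opmul_permop (T : finType) (f g : T -> T) :
  opmul (permop f) (permop g) = permop (g \o f).
Proof. by apply: op_ext => i j; rewrite opmul_permopl. Qed.

Lemma adj_opmul (T : finType) (A B : op C T) :
  adj (opmul A B) = opmul (adj B) (adj A).
Proof.
apply: op_ext => i j; rewrite /adj /opmul rmorph_sum.
by apply: eq_bigr => k _; rewrite rmorphM mulrC.
Qed.

Lemma tens_permop (T1 T2 : finType) (f : T1 -> T1) (g : T2 -> T2) :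
  tens (permop f) (permop g) = permop (fun x => (f x.1, g x.2)).
Proof.
by apply: op_ext => -[i1 i2] [j1 j2]; rewrite /tens /permop -natrM mulnb xpair_eqE.
Qed.

Lemma sum_pair_mul (T1 T2 : finType) (F : T1 -> C) (G : T2 -> C) :
  \sum_(k : T1 * T2) F k.1 * G k.2 = (\sum_i F i) * (\sum_j G j).
Proof. by rewrite big_distrlr pair_bigA. Qed.

Lemma trace_ptr2 (T1 T2 : finType) (A : op C (T1 * T2)%type) :
  trace (ptr2 A) = trace A.
Proof. by rewrite /trace /ptr2 pair_bigA; apply: eq_bigr => -[]. Qed.

End PermutationOperators.

Section SwapModel.
Variables (C : numClosedFieldType) (d : nat).
Notation S := 'I_d.
Notation E := ('I_d * 'I_d)%type.

Definition swap_SE1 (x : S * E) : S * E := (x.2.1, (x.1, x.2.2)).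
Definition swap_SE2 (x : S * E) : S * E := (x.2.2, (x.2.1, x.1)).

Lemma U1_permop : @U1 C d = permop C swap_SE1.
Proof.
apply: op_ext => -[a [b c]] [a' [b' c']]; rewrite /U1 /permop /swap_SE1 /= !xpair_eqE.
by rewrite (eq_sym a) (eq_sym b) (eq_sym c); case: (a' == b); case: (b' == a); case: (c' == c).
Qed.

Lemma U2_permop : @U2 C d = permop C swap_SE2.
Proof.
apply: op_ext => -[a [b c]] [a' [b' c']]; rewrite /U2 /permop /swap_SE2 /= !xpair_eqE.
by rewrite (eq_sym a) (eq_sym b) (eq_sym c); case: (a' == c); case: (b' == b); case: (c' == a).
Qed.

Variable eta : op C E.

Lemma Lam_srE (X : op C S) a a' : Lam_sr eta X a a' = trace X * ptr2 eta a a'.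
Proof.
rewrite /Lam_sr U1_permop conjop_permop.
exact: (sum_pair_mul (fun i => X i i) (fun j => eta (a, j) (a', j))).
Qed.

Lemma eta_sE (rho : op C S) : eta_s eta rho = tens rho (ptr1 eta).
Proof.
apply: op_ext => i j; rewrite /eta_s U1_permop conjop_permop /ptr1 /tens mulr_sumr.
by apply: eq_bigr.
Qed.

Lemma Lam_tsE (rho X : op C S) a a' :
  Lam_ts eta rho X a a' = trace X * trace rho * ptr1 eta a a'.
Proof.
rewrite /Lam_ts eta_sE U2_permop conjop_permop /ptr2 [trace X * _]mulrC.
rewrite -sum_pair_mul mulr_suml.
by apply: eq_bigr => k _; rewrite /reidx /tens /= mulrCA mulrA.
Qed.

Lemma Lam_trE (X : op C S) a a' : Lam_tr eta X a a' = trace X * ptr1 eta a a'.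
Proof.
rewrite /Lam_tr -adj_opmul -/(conjop _ _) U1_permop U2_permop opmul_permop.
rewrite conjop_permop.
exact: (sum_pair_mul (fun i => X i i) (fun j => eta (j, a) (j, a'))).
Qed.

Lemma omega_ASE (rho sigma : op C S) i j :
  omega_AS eta rho sigma i j = trace rho * trace sigma * eta i j.
Proof.
rewrite /omega_AS /tau_AE U1_permop U2_permop idop_permop tens_permop.
rewrite !conjop_permop -sum_pair_mul mulr_suml /ptr2.
apply: eq_bigr => k _; rewrite /reidx /tens /=.
by case: i j => [a s] [a' s']; rewrite /= mulrAC.
Qed.

End SwapModel.

Theorem mainTheorem3 (C : numClosedFieldType) (d : nat) (eta : op C ('I_d * 'I_d)%type) :
  density eta ->
  (* (i) oCP-divisibility *)
  ((forall rho rho' : op C 'I_d, density rho -> density rho' ->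
      Lam_ts eta rho = Lam_ts eta rho') /\
   (forall rho : op C 'I_d, density rho ->
      forall X : op C 'I_d, Lam_tr eta X = Lam_ts eta rho (Lam_sr eta X))) /\
  (* (ii) storing experiment yields eta (A <-> E1, S <-> E2) *)
  (forall rho sigma : op C 'I_d, density rho -> density sigma ->
      omega_AS eta rho sigma = eta) /\
  (* consequence: correlated output from independent inputs *)
  (~ product_state eta ->
     forall rho sigma : op C 'I_d, density rho -> density sigma ->
       ~ product_state (omega_AS eta rho sigma)).
Proof.
move=> [_ tr_eta].
have omega_eta rho sigma : density rho -> density sigma -> omega_AS eta rho sigma = eta.
  move=> [_ tr_rho] [_ tr_sigma]; apply: op_ext => i j.
  by rewrite omega_ASE tr_rho tr_sigma !mul1r.
have tr_Lam_sr X : trace (Lam_sr eta X) = trace X.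
  rewrite {1}/trace (eq_bigr _ (fun a _ => Lam_srE eta X a a)) -mulr_sumr.
  by rewrite -/(trace (ptr2 eta)) trace_ptr2 tr_eta mulr1.
split; [split | split].
- move=> rho rho' [_ tr_rho] [_ tr_rho'].
  apply: functional_extensionality => X; apply: op_ext => a a'.
  by rewrite !Lam_tsE tr_rho tr_rho'.
- move=> rho [_ tr_rho] X; apply: op_ext => a a'.
  by rewrite Lam_trE Lam_tsE tr_Lam_sr tr_rho mulr1.
- exact: omega_eta.
- by move=> not_prod rho sigma rho_dens sigma_dens; rewrite omega_eta.
Qed.
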